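(* Let $\mathbf{G}$ be a Markov equivalence class of DAGs over a finite set $\mathbf{V}$, $\mathcal{G}\in\mathbf{G}$, $\mathbf{Y}\subseteq\mathbf{V}$ and $\mathbf{Z}=\mathrm{can}_{\mathbf{G}}(\mathbf{Y})$. Then $\mathrm{an}_{\mathcal{G}}(\mathbf{Y})=\mathbf{Z}$ if and only if every edge of $\mathcal{G}$ between a node $Z\in\mathbf{Z}$ and a node $X\in\mathbf{V}\setminus\mathbf{Z}$ is directed out of $Z$ (i.e. $Z\to X$).
   Context: Two DAGs over $\mathbf{V}$ are Markov equivalent iff they have the same skeleton and the same unshielded colliders. $\mathrm{an}_{\mathcal{G}}(\mathbf{Y})$ is the set of nodes that either belong to $\mathbf{Y}$ or have a directed path in $\mathcal{G}$ to some node of $\mathbf{Y}$. $X$ is a compelled ancestor of $Y$ in $\mathbf{G}$ if $X\in\mathrm{an}_{\mathcal{G}}(Y)$ for every $\mathcal{G}\in\mathbf{G}$; $\mathrm{can}_{\mathbf{G}}(\mathbf{Y})$ is the union over $Y\in\mathbf{Y}$ of the sets of compelled ancestors of $Y$. *)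

(* A directed graph on a finite node set V is an edge relation
   g : rel V, with g x y meaning the edge x -> y. *)
From mathcomp Require Import all_boot.
Set Implicit Arguments. Unset Strict Implicit. Unset Printing Implicit Defensive.

Definition dag (V : finType) (g : rel V) : Prop :=
  (forall x, ~~ g x x) /\ (forall x y, g x y -> ~~ connect g y x).

Definition adj (V : finType) (g : rel V) (x y : V) : bool := g x y || g y x.

Definition unshielded_collider (V : finType) (g : rel V) (x z y : V) : bool :=
  [&& g x z, g y z, x != y & ~~ adj g x y].

Definition markov_equiv (V : finType) (g h : rel V) : Prop :=
  (forall x y, adj g x y = adj h x y) /\
  (forall x z y, unshielded_collider g x z y = unshielded_collider h x z y).

Definition mec (V : finType) (g0 : rel V) (g : rel V) : Prop :=
  dag g /\ markov_equiv g g0.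

Definition an (V : finType) (g : rel V) (Y : {set V}) (x : V) : Prop :=
  exists2 y, y \in Y & connect g x y.

Definition compelled_anc (V : finType) (C : rel V -> Prop) (x y : V) : Prop :=
  forall g, C g -> connect g x y.

Definition can (V : finType) (C : rel V -> Prop) (Y : {set V}) (x : V) : Prop :=
  exists2 y, y \in Y & compelled_anc C x y.

(* Every compelled ancestor of Y is in particular an ancestor of Y in g itself,
   and Y consists of compelled ancestors, so Y ⊆ Z ⊆ an_g(Y) for Z = can(Y).
   Such a Z equals an_g(Y) iff it is closed under taking parents in g: if it is,
   an edge entering Z from outside would put its tail in Z; conversely, an edge
   u -> v with v ∈ Z and u ∉ Z must, by the hypothesis on edges, be oriented
   v -> u as well, which contradicts acyclicity. *)
From mathcomp Require Import all_boot.
From Stdlib Require Import Classical.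

Set Implicit Arguments.
Unset Strict Implicit.
Unset Printing Implicit Defensive.

Section ParentClosed.

Variables (V : finType) (g : rel V).

Lemma connect_parent_closed (P : V -> Prop) :
  (forall u v, g u v -> P v -> P u) ->
  forall x y, connect g x y -> P y -> P x.
Proof.
move=> closedP x y /connectP [p]; elim: p x => [|z p IHp] x /=.
  by move=> _ ->.
by case/andP=> gxz pz ly Py; apply: (closedP x z gxz); exact: IHp.
Qed.

Lemma dag_edge_asym u v : dag g -> g u v -> ~~ g v u.
Proof.
by case=> _ acyclic guv; apply/negP=> gvu; move: (acyclic u v guv); rewrite connect1.
Qed.

Lemma an_parent (Y : {set V}) u v : g u v -> an g Y v -> an g Y u.
Proof. by move=> guv [y Yy cvy]; exists y => //; exact: connect_trans (connect1 guv) cvy. Qed.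

Lemma an_eq_iff_edges_out (Y : {set V}) (Z : V -> Prop) :
  dag g -> (forall y, y \in Y -> Z y) -> (forall x, Z x -> an g Y x) ->
  (forall x, an g Y x <-> Z x) <->
  (forall z x, Z z -> ~ Z x -> adj g z x -> g z x).
Proof.
move=> dag_g YZ Zan; split.
  move=> anZ z x Zz nZx /orP [//|gxz].
  by case: nZx; apply/anZ; apply: an_parent gxz _; exact: Zan.
move=> edges_out x; split; last exact: Zan.
case=> y Yy cxy; apply: connect_parent_closed cxy (YZ y Yy) => u v guv Zv.
apply: NNPP => nZu.
have gvu : g v u by apply: edges_out Zv nZu _; rewrite /adj guv orbT.
by move: (dag_edge_asym dag_g guv); rewrite gvu.
Qed.

End ParentClosed.

Theorem lemma5 (V : finType) (g : rel V) (Y : {set V}) :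
  dag g ->
  (forall x, an g Y x <-> can (mec g) Y x) <->
  (forall z x, can (mec g) Y z -> ~ can (mec g) Y x -> adj g z x -> g z x).
Proof.
move=> dag_g; apply: an_eq_iff_edges_out => //.
- by move=> y Yy; exists y => // h _; exact: connect0.
- by move=> x [y Yy compelled]; exists y => //; exact: compelled.
Qed.
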